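(* Let $\mathbf{z}\sim\mathcal{N}(\mathbf{0},\mathbf{I}_{d\times d})$, $\mathbf{x}\in\mathbb{R}^d$, $y=\langle\mathbf{x},\mathbf{z}\rangle$, and let $\mathbf{D}^*=[\mathbf{v}_1,\dots,\mathbf{v}_n]\in\mathbb{R}^{d\times n}$ be column-orthogonal, with queries $q_i=\langle\mathbf{v}_i,\mathbf{z}\rangle$ whose observed values are $r_i$. If $\mathbf{D}=[\mathbf{d}_1,\dots,\mathbf{d}_n]=\mathbf{D}^*$, then $$f_{\mathbf{D}}\big(\mathbf{x},\{r_{\pi(i)}\}_{i=1}^k\big)=\sum_{i\in S}\langle\mathbf{d}_i,\mathbf{x}\rangle r_i,$$ where $S=\arg\max_{T\subseteq[n],|T|\le k}\sum_{i\in T}|\langle\mathbf{d}_i,\mathbf{x}\rangle|$ is the set of indices of the $k$ largest values of $|\langle\mathbf{d}_i,\mathbf{x}\rangle|$.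
   Context: Column-orthogonal means $\mathbf{A}^\top\mathbf{A}=\mathbf{I}$. For a query feature matrix $\mathbf{D}$, the IP-OMP selection rule $\pi:[k]\to[n]$ is defined iteratively for $t=1,\dots,k$ by $\pi(t)=\arg\max_i \frac{|\langle\Pi^\perp_{t-1}\mathbf{d}_i,\Pi^\perp_{t-1}\mathbf{x}\rangle|}{\|\Pi^\perp_{t-1}\mathbf{d}_i\|_2\|\Pi^\perp_{t-1}\mathbf{x}\|_2}$ over not-yet-selected indices, with $\Pi^\perp_{t-1}$ the orthogonal projection onto the orthogonal complement of the span of $\mathbf{d}_{\pi(1)},\dots,\mathbf{d}_{\pi(t-1)}$. $f_{\mathbf{D}}(\mathbf{x},\{r_{\pi(i)}\}_{i=1}^k)$ is the maximum likelihood estimator of $y$ given $q_{\pi(i)}=r_{\pi(i)}$ for $i=1,\dots,k$, where $\pi$ is the IP-OMP selection computed with $\mathbf{D}$. *)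

From HB Require Import structures.
From mathcomp Require Import all_boot all_order all_algebra.
From mathcomp Require Import reals sequences exp.
Set Implicit Arguments. Unset Strict Implicit. Unset Printing Implicit Defensive.
Import Order.TTheory GRing.Theory Num.Theory.
Local Open Scope ring_scope.

Section IPOMP.
Variable R : realType.

Definition ip (d : nat) (a b : 'cV[R]_d) : R := (a^T *m b) 0 0.
Definition vnorm (d : nat) (a : 'cV[R]_d) : R := Num.sqrt (ip a a).

(* Orthogonal projection of w onto the column space of B:
   B a where a solves the normal equations B^T B a = B^T w
   (pinvmx is a generalized inverse on the row space). *)
Definition proj_col (d m : nat) (B : 'M[R]_(d, m)) (w : 'cV[R]_d) : 'cV[R]_d :=
  ((w^T *m B *m pinvmx (B^T *m B)) *m B^T)^T.

(* D with the columns outside A set to 0: its column span is span{d_i : i in A}. *)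
Definition selcols (d n : nat) (D : 'M[R]_(d, n)) (A : {set 'I_n}) : 'M[R]_(d, n) :=
  D *m diag_mx (\row_i (i \in A)%:R).

Definition perp_proj (d n : nat) (D : 'M[R]_(d, n)) (A : {set 'I_n}) (w : 'cV[R]_d)
  : 'cV[R]_d := w - proj_col (selcols D A) w.

(* The IP-OMP score of index i after having selected the set A
   (division by 0 yields 0, MathComp convention). *)
Definition ipomp_score (d n : nat) (D : 'M[R]_(d, n)) (x : 'cV[R]_d)
  (A : {set 'I_n}) (i : 'I_n) : R :=
  `| ip (perp_proj D A (col i D)) (perp_proj D A x) |
  / (vnorm (perp_proj D A (col i D)) * vnorm (perp_proj D A x)).

(* pi : [k] -> [n] (0-based) is an IP-OMP selection sequence for D and x:
   pi(s) is never a previously selected index and maximizes the score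
   among the not-yet-selected indices (any tie-breaking allowed). *)
Definition ipomp_sel (d n k : nat) (D : 'M[R]_(d, n)) (x : 'cV[R]_d)
  (pi : 'I_k -> 'I_n) : Prop :=
  injective pi /\
  forall s : 'I_k,
    let A := [set pi j | j : 'I_k & (j < s)%N] in
    forall i : 'I_n, i \notin A -> ipomp_score D x A i <= ipomp_score D x A (pi s).

Definition is_topk (d n : nat) (D : 'M[R]_(d, n)) (x : 'cV[R]_d) (k : nat)
  (S : {set 'I_n}) : Prop :=
  (#|S| <= k)%N /\
  forall T : {set 'I_n}, (#|T| <= k)%N ->
    \sum_(i in T) `| ip (col i D) x | <= \sum_(i in S) `| ip (col i D) x |.

(* Density (up to a positive constant) of a centered Gaussian N(0, Sigma) on R^m,
   taken w.r.t. Lebesgue measure on its support (the range of Sigma):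
   exp(-1/2 w Sigma^+ w^T) on the support, 0 outside.  For invertible Sigma
   this is the usual Gaussian density up to its normalizing constant. *)
Definition gauss_dens (m : nat) (Sigma : 'M[R]_m) (w : 'rV[R]_m) : R :=
  if (w <= Sigma)%MS then expR (- ((w *m pinvmx Sigma *m w^T) 0 0) / 2) else 0.

(* z ~ N(0, I_d); the random vector (y, q_{pi 1}, ..., q_{pi k}) equals M^T z
   with M = [x | d_{pi 1} | ... | d_{pi k}], hence is N(0, M^T M). *)
Definition query_mx (d n k : nat) (D : 'M[R]_(d, n)) (x : 'cV[R]_d)
  (pi : 'I_k -> 'I_n) : 'M[R]_(d, 1 + k) :=
  row_mx x (\matrix_(i < d, j < k) D i (pi j)).

Definition joint_cov (d n k : nat) (D : 'M[R]_(d, n)) (x : 'cV[R]_d)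
  (pi : 'I_k -> 'I_n) : 'M[R]_(1 + k) :=
  (query_mx D x pi)^T *m query_mx D x pi.

(* t is a maximum-likelihood estimate of y given q_{pi j} = r_{pi j}, j < k:
   t maximizes the joint density of (y, q_pi) at (t, r_pi), equivalently the
   conditional density of y given the observations. *)
Definition is_MLE (d n k : nat) (D : 'M[R]_(d, n)) (x : 'cV[R]_d)
  (pi : 'I_k -> 'I_n) (r : 'I_n -> R) (t : R) : Prop :=
  let obs := fun u : R => row_mx (u%:M : 'M[R]_1) (\row_(j < k) r (pi j)) in
  0 < gauss_dens (joint_cov D x pi) (obs t) /\
  forall u : R, gauss_dens (joint_cov D x pi) (obs u)
                <= gauss_dens (joint_cov D x pi) (obs t).

End IPOMP.

From HB Require Import structures.
From mathcomp Require Import all_boot all_order all_algebra.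
From mathcomp Require Import reals sequences exp.
From mathcomp Require Import ring.
Set Implicit Arguments. Unset Strict Implicit. Unset Printing Implicit Defensive.
Import Order.TTheory GRing.Theory Num.Theory.
Local Open Scope ring_scope.

(* For orthonormal columns, projecting away the selected columns moves neither an
   unselected column d_i nor the value <d_i, x>, so at every step the IP-OMP score
   of d_i is |<d_i, x>| divided by a quantity independent of i: greedy selection
   picks indices of maximal |<d_i, x>|, and an exchange argument shows that these
   form a top-k set.  For the estimator, (y, q_pi) = M^T z with M = [x | E], E the
   selected columns, so its covariance is the Gram matrix of M.  With b = E^T x and
   the Schur complement s = |x|^2 - |b|^2 = |x - E b|^2, the quadratic form at
   (u, rho) is |rho|^2 + (u - <rho, b>)^2 / s when s > 0, while for s = 0 the
   support of the density forces u = <rho, b>.  Either way the density is maximal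
   exactly at u = <rho, b> = sum_(i in S) <d_i, x> r_i. *)

Lemma ler_sum_dominant_set (R : realDomainType) (I : finType) (a : I -> R)
    (S T : {set I}) :
  (forall i, 0 <= a i) -> {in ~: S & S, forall i j, a i <= a j} ->
  (#|T| <= #|S|)%N -> \sum_(i in T) a i <= \sum_(i in S) a i.
Proof.
move=> a_ge0 a_dom le_TS.
rewrite (big_setID S) [leRHS](big_setID T) /= setIC lerD2l.
pose c := \big[Order.max/0]_(i in T :\: S) a i.
have le_ac i : i \in T :\: S -> a i <= c by move=> iTS; exact: le_bigmax_cond.
have le_ca j : j \in S :\: T -> c <= a j.
  rewrite inE => /andP[_ jS]; apply: bigmax_le => [|i]; first exact: a_ge0.
  by rewrite !inE => /andP[iS _]; apply: a_dom; rewrite ?inE.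
have le_card : (#|T :\: S| <= #|S :\: T|)%N.
  by move: le_TS; rewrite -(cardsID S T) -(cardsID T S) setIC leq_add2l.
apply: (le_trans (ler_sum _ le_ac)); rewrite sumr_const.
apply: (le_trans (ler_wpMn2l _ le_card)); first exact: bigmax_ge_id.
by rewrite -sumr_const; apply: ler_sum.
Qed.

Lemma pinvmx_sym_quad (F : fieldType) m p (A : 'M[F]_m) (v : 'M[F]_(p, m)) :
  A^T = A -> v *m A *m pinvmx A *m (v *m A)^T = v *m A *m v^T.
Proof. by move=> At; rewrite trmx_mul At mulmxA mulmxKpV ?submxMl. Qed.

Lemma residual_gram (F : comRingType) d k (E : 'M[F]_(d, k)) (x : 'cV[F]_d) b :
  E^T *m E = 1%:M -> E^T *m x = b ->
  (x - E *m b)^T *m (x - E *m b) = x^T *m x - b^T *m b.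
Proof.
move=> EtE Etx; have xtE : x^T *m E = b^T by rewrite -Etx trmx_mul trmxK.
rewrite [(x - _)^T]raddfB /= trmx_mul mulmxBl !mulmxBr !mulmxA xtE.
rewrite -[b^T *m E^T *m E]mulmxA EtE mulmx1 -[b^T *m E^T *m x]mulmxA Etx.
by rewrite subrr subr0.
Qed.

Lemma colsub_orthonormal (F : nzRingType) d n k (D : 'M[F]_(d, n))
    (pi : 'I_k -> 'I_n) :
  D^T *m D = 1%:M -> injective pi -> (colsub pi D)^T *m colsub pi D = 1%:M.
Proof.
move=> DtD pi_inj; rewrite trmx_mxsub -mxsub_mul DtD.
by apply/matrixP => i j; rewrite !mxE (inj_eq pi_inj).
Qed.

Section InnerProduct.
Variables (R : realType) (d : nat).
Implicit Types a : 'cV[R]_d.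

Lemma ip0 a : ip a 0 = 0.
Proof. by rewrite /ip mulmx0 mxE. Qed.

Lemma ip_self_ge0 a : 0 <= ip a a.
Proof. by rewrite /ip mxE; apply: sumr_ge0 => l _; rewrite mxE -expr2 sqr_ge0. Qed.

Lemma ip_self_eq0 a : ip a a = 0 -> a = 0.
Proof.
rewrite /ip mxE => /psumr_eq0P sq_eq0.
apply/matrixP => l j; rewrite ord1 mxE.
have /eqP : a^T 0 l * a l 0 = 0.
  by apply: sq_eq0 => // m _; rewrite mxE -expr2 sqr_ge0.
by rewrite mxE mulf_eq0 orbb => /eqP.
Qed.

Lemma vnorm_eq0 a : vnorm a = 0 -> a = 0.
Proof.
move/eqP; rewrite sqrtr_eq0 => ip_le0; apply: ip_self_eq0.
by apply/eqP; rewrite eq_le ip_le0 ip_self_ge0.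
Qed.

End InnerProduct.

Lemma row_mul_trcolsub (R : realType) d n k (D : 'M[R]_(d, n)) (x : 'cV[R]_d)
    (pi : 'I_k -> 'I_n) (r : 'I_n -> R) : injective pi ->
  (\row_j r (pi j) *m ((colsub pi D)^T *m x)) 0 0 =
  \sum_(i in [set pi j | j : 'I_k]) ip (col i D) x * r i.
Proof.
move=> pi_inj; rewrite big_imset /=; last by move=> i j _ _ /pi_inj.
rewrite mxE; apply: eq_bigr => j _; rewrite mulrC /ip !mxE; congr (_ * _).
by apply: eq_bigr => l _; rewrite !mxE.
Qed.

Section OrthonormalColumns.
Variables (R : realType) (d n : nat) (D : 'M[R]_(d, n)).
Hypothesis DtD : D^T *m D = 1%:M.

Lemma ip_col_col i : ip (col i D) (col i D) = 1.
Proof.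
have : (D^T *m D) i i = 1 by rewrite DtD mxE eqxx.
by rewrite /ip !mxE => <-; apply: eq_bigr => l _; rewrite !mxE.
Qed.

Lemma vnorm_col i : vnorm (col i D) = 1.
Proof. by rewrite /vnorm ip_col_col sqrtr1. Qed.

Lemma trcol_selcols (A : {set 'I_n}) i :
  i \notin A -> (col i D)^T *m selcols D A = 0.
Proof.
move=> iA; rewrite /selcols tr_col mulmxA -row_mul DtD.
apply/matrixP=> a j; rewrite mul_mx_diag !mxE.
by case: (eqVneq i j) => [<-|_]; rewrite ?(negPf iA) ?mulr0 ?mul0r.
Qed.

Lemma ip_col_perp_proj (A : {set 'I_n}) i w :
  i \notin A -> ip (col i D) (perp_proj D A w) = ip (col i D) w.
Proof.
move=> iA; rewrite /ip /perp_proj /proj_col trmx_mul trmxK mulmxBr mulmxA.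
by rewrite trcol_selcols // mul0mx subr0.
Qed.

Lemma perp_proj_col (A : {set 'I_n}) i :
  i \notin A -> perp_proj D A (col i D) = col i D.
Proof.
by move=> iA; rewrite /perp_proj /proj_col trcol_selcols // !mul0mx trmx0 subr0.
Qed.

Lemma ipomp_score_orthonormal x (A : {set 'I_n}) i : i \notin A ->
  ipomp_score D x A i = `|ip (col i D) x| / vnorm (perp_proj D A x).
Proof.
by move=> iA; rewrite /ipomp_score perp_proj_col // ip_col_perp_proj // vnorm_col mul1r.
Qed.

Lemma ipomp_score_le_ip x (A : {set 'I_n}) i j : i \notin A -> j \notin A ->
  ipomp_score D x A i <= ipomp_score D x A j ->
  `|ip (col i D) x| <= `|ip (col j D) x|.
Proof.
move=> iA jA; rewrite !ipomp_score_orthonormal //.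
have [/vnorm_eq0 perp_x0 _ | perp_x_neq0] := eqVneq (vnorm (perp_proj D A x)) 0.
  by rewrite -(ip_col_perp_proj x iA) perp_x0 ip0 normr0.
by rewrite ler_pM2r // invr_gt0 lt_def perp_x_neq0 sqrtr_ge0.
Qed.

Lemma ipomp_sel_topk x k (pi : 'I_k -> 'I_n) :
  ipomp_sel D x pi -> is_topk D x k [set pi j | j : 'I_k].
Proof.
move=> [pi_inj pi_greedy].
have cardS : #|[set pi j | j : 'I_k]| = k by rewrite card_imset // card_ord.
split=> [|T]; first by rewrite cardS.
rewrite -{1}cardS => le_TS; apply: ler_sum_dominant_set le_TS.
  by move=> i; exact: normr_ge0.
move=> i _ /[!inE] iS /imsetP[s _ ->].
set A := [set pi j | j : 'I_k & (j < s)%N].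
have iA : i \notin A by apply: contra iS => /imsetP[j _ ->]; exact: imset_f.
have sA : pi s \notin A.
  by apply/imsetP => -[j /[!inE] j_lt /pi_inj s_eq]; rewrite s_eq ltnn in j_lt.
exact: ipomp_score_le_ip iA sA (pi_greedy s i iA).
Qed.

End OrthonormalColumns.

Section GaussianObservation.
Variables (R : realType) (d k : nat) (x : 'cV[R]_d) (E : 'M[R]_(d, k)).
Variable rho : 'rV[R]_k.
Hypothesis EtE : E^T *m E = 1%:M.

(* Sigma is the covariance of (y, q_pi); s and mu are the conditional variance
   and mean of y given q_pi = rho. *)
Let Sigma := (row_mx x E)^T *m row_mx x E.
Let b := E^T *m x.
Let s : R := (x^T *m x - b^T *m b) 0 0.
Let mu : R := (rho *m b) 0 0.
Let q : R := (rho *m rho^T) 0 0.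
Let obs (u : R) := row_mx (u%:M : 'M[R]_1) rho.

Lemma mul_row_mx_gram (a : 'M[R]_1) (c : 'rV[R]_k) :
  row_mx a c *m Sigma = row_mx (a *m (x^T *m x) + c *m b) (a *m b^T + c).
Proof.
rewrite /Sigma mulmxA tr_row_mx mul_row_col mul_mx_row !mulmxDl -!mulmxA EtE.
by rewrite mulmx1 trmx_mul trmxK.
Qed.

Lemma schur_ge0 : 0 <= s.
Proof.
suff -> : s = ip (x - E *m b) (x - E *m b) by exact: ip_self_ge0.
by rewrite /ip residual_gram.
Qed.

Lemma trmx_gram : Sigma^T = Sigma.
Proof. by rewrite /Sigma trmx_mul trmxK. Qed.

Lemma schur_scalar : x^T *m x - b^T *m b = s%:M.
Proof. exact: mx11_scalar. Qed.

Lemma rho_b_scalar : rho *m b = mu%:M.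
Proof. exact: mx11_scalar. Qed.

Lemma rho_rho_scalar : rho *m rho^T = q%:M.
Proof. exact: mx11_scalar. Qed.

Lemma obs_eq_mul_gram u : (s != 0) || (u == mu) ->
  let a := (u - mu) / s in obs u = row_mx a%:M (rho - a *: b^T) *m Sigma.
Proof.
move=> hu a; rewrite mul_row_mx_gram; congr row_mx.
  2: by rewrite mul_scalar_mx addrC subrK.
rewrite mul_scalar_mx mulmxBl -scalemxAl addrCA -scalerBr schur_scalar rho_b_scalar.
rewrite scale_scalar_mx -raddfD /=; congr scalar_mx.
case/orP: hu => [s_neq0 | /eqP u_mu]; first by rewrite /a divfK // addrC subrK.
by rewrite /a u_mu subrr !mul0r addr0.
Qed.

Lemma obs_submx u : (obs u <= Sigma)%MS = (s != 0) || (u == mu).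
Proof.
apply/idP/idP => [/submxP[v]|/obs_eq_mul_gram ->]; last exact: submxMl.
rewrite -(hsubmxK v) mul_row_mx_gram => /eq_row_mx[u_eq rho_eq].
have [s0|] //= := eqVneq s 0.
have : u%:M = lsubmx v *m (x^T *m x - b^T *m b) + rho *m b.
  rewrite u_eq rho_eq mulmxBr mulmxDl [lsubmx v *m (b^T *m b)]mulmxA.
  by rewrite addrA subrK.
rewrite schur_scalar s0 rho_b_scalar raddf0 mulmx0 add0r.
by move/(congr1 (fun M : 'M[R]_1 => M 0 0)); rewrite !mxE !mulr1n => ->.
Qed.

Lemma obs_quad_form u : (s != 0) || (u == mu) ->
  (obs u *m pinvmx Sigma *m (obs u)^T) 0 0 = q + (u - mu) ^+ 2 / s.
Proof.
move=> /obs_eq_mul_gram /= obsE; rewrite obsE pinvmx_sym_quad ?trmx_gram // -obsE.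
rewrite /obs tr_row_mx mul_row_col tr_scalar_mx mul_scalar_mx raddfB /= linearZ /=.
rewrite trmxK mulmxBr -scalemxAr rho_b_scalar rho_rho_scalar !mxE /= !mulr1n.
ring.
Qed.

(* When s = 0 the only admissible u is mu, and then (u - mu) ^+ 2 / s = 0 / 0 = 0. *)
Lemma gauss_dens_obs u : gauss_dens Sigma (obs u) =
  if (s != 0) || (u == mu) then expR (- (q + (u - mu) ^+ 2 / s) / 2) else 0.
Proof. by rewrite /gauss_dens obs_submx; case: ifP => // /obs_quad_form ->. Qed.

Lemma gauss_dens_obs_argmax t :
  (0 < gauss_dens Sigma (obs t) /\
   forall u, gauss_dens Sigma (obs u) <= gauss_dens Sigma (obs t)) <-> t = mu.
Proof.
have gap_ge0 u : 0 <= (u - mu) ^+ 2 / s by rewrite divr_ge0 ?sqr_ge0 ?schur_ge0.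
have ler_expR_gap u : expR (- (q + (u - mu) ^+ 2 / s) / 2) <= expR (- q / 2).
  by rewrite ler_expR ler_pM2r ?invr_gt0 // lerN2 lerDl.
have dens_mu : gauss_dens Sigma (obs mu) = expR (- q / 2).
  by rewrite gauss_dens_obs eqxx orbT subrr expr0n mul0r addr0.
split=> [[dens_gt0 dens_max] | ->]; last first.
  rewrite dens_mu; split=> [|u]; first exact: expR_gt0.
  rewrite gauss_dens_obs; case: ifP => _; first exact: ler_expR_gap.
  exact/ltW/expR_gt0.
move: dens_gt0 (dens_max mu); rewrite dens_mu gauss_dens_obs.
case: ifP => [/orP[s_neq0 _ | /eqP //] | _]; last by rewrite ltxx.
rewrite ler_expR ler_pM2r ?invr_gt0 // lerN2 gerDl => gap_le0.
have /eqP : (t - mu) ^+ 2 / s = 0 by apply/eqP; rewrite eq_le gap_le0 gap_ge0.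
by rewrite mulf_eq0 invr_eq0 (negPf s_neq0) orbF sqrf_eq0 subr_eq0 => /eqP.
Qed.

End GaussianObservation.

Theorem lemma3p1 (R : realType) (d n k : nat) (D : 'M[R]_(d, n)) (x : 'cV[R]_d)
  (r : 'I_n -> R) (pi : 'I_k -> 'I_n) :
  D^T *m D = 1%:M ->
  ipomp_sel D x pi ->
  let S := [set pi j | j : 'I_k] in
  is_topk D x k S /\
  (forall t : R, is_MLE D x pi r t <-> t = \sum_(i in S) ip (col i D) x * r i).
Proof.
move=> DtD sel S; split; first exact: ipomp_sel_topk.
have pi_inj := sel.1.
move=> t; rewrite -row_mul_trcolsub //.
rewrite /is_MLE /joint_cov; have -> : query_mx D x pi = row_mx x (colsub pi D) by [].
exact: gauss_dens_obs_argmax (\row_j r (pi j)) (colsub_orthonormal DtD pi_inj) t.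
Qed.
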